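(* Let $E=(C,V)$ be an approval election such that $0<|A(u)|=|A(v)|<|C|$ for all $u,v\in V$. Then $\mathrm{pair\text{-}agr}(E)=\mathrm{pcc\text{-}agr}(E)$.
   Context: An (approval) election is a pair $E=(C,V)$ with candidate set $C=\{c_1,\dots,c_m\}$ and a collection of voters $V$; each vote is a binary vector in $\{0,1\}^m$, and $A(v)$ is the set of candidates approved by $v$. $\mathrm{ham}(u,v)=\sum_j|u[j]-v[j]|$. $\mathrm{satr}(E)=\frac{1}{|V||C|}\sum_{v\in V}|A(v)|$. $\mathrm{pair\text{-}agr}(E)=1-\frac{\sum_{u\in V}\sum_{v\in V}\mathrm{ham}(u,v)}{2|V|^2|C|\,\mathrm{satr}(E)(1-\mathrm{satr}(E))}$. Pearson correlation $\mathrm{pcc}(x,y)=\frac{\sum_i(x[i]-\overline{x})(y[i]-\overline{y})}{\sqrt{\sum_i(x[i]-\overline{x})^2}\sqrt{\sum_i(y[i]-\overline{y})^2}}$ (set to $1$ if $x$ or $y$ is constant), and $\mathrm{pcc\text{-}agr}(E)=\frac{1}{|V|^2}\sum_{u\in V}\sum_{v\in V}\mathrm{pcc}(u,v)$; sums are over all ordered pairs including $u=v$. *)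

From mathcomp Require Import all_boot all_order all_algebra.
Set Implicit Arguments. Unset Strict Implicit. Unset Printing Implicit Defensive.
Import Order.TTheory GRing.Theory Num.Theory.
Local Open Scope ring_scope.

(* An approval election with m candidates c_0..c_{m-1} and n voters (a
   collection, so repeated votes are allowed): vote i is a binary vector
   V i : {ffun 'I_m -> bool};  A(v) = set of j with v j = true. *)
Section Election.
Variable R : rcfType.
Variables m n : nat.

Definition vote := {ffun 'I_m -> bool}.

Definition bv (v : vote) (j : 'I_m) : R := (v j)%:R.

Definition napp (v : vote) : nat := #|[set j | v j]|.

Definition ham (u v : vote) : R := \sum_(j < m) `|bv u j - bv v j|.

Definition satr (V : 'I_n -> vote) : R :=
  (\sum_(i < n) (napp (V i))%:R) / (n%:R * m%:R).

Definition pair_agr (V : 'I_n -> vote) : R :=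
  1 - (\sum_(i < n) \sum_(k < n) ham (V i) (V k)) /
      (2 * n%:R ^+ 2 * m%:R * satr V * (1 - satr V)).

Definition mean (x : 'I_m -> R) : R := (\sum_(j < m) x j) / m%:R.

Definition is_const (x : 'I_m -> R) : bool := [forall j, forall k, x j == x k].

Definition pcc (x y : 'I_m -> R) : R :=
  if is_const x || is_const y then 1 else
  (\sum_(j < m) (x j - mean x) * (y j - mean y)) /
  (Num.sqrt (\sum_(j < m) (x j - mean x) ^+ 2) *
   Num.sqrt (\sum_(j < m) (y j - mean y) ^+ 2)).

Definition pcc_agr (V : 'I_n -> vote) : R :=
  (\sum_(i < n) \sum_(k < n) pcc (bv (V i)) (bv (V k))) / n%:R ^+ 2.

End Election.

From mathcomp Require Import all_boot all_order all_algebra.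
From mathcomp Require Import ring.

Set Implicit Arguments.
Unset Strict Implicit.
Unset Printing Implicit Defensive.
Import Order.TTheory GRing.Theory Num.Theory.
Local Open Scope ring_scope.

(* For 0/1 vectors with K ones each, the Hamming distance is 2K minus twice
   the inner product, and the centred inner product is the inner product minus
   K^2/m, while each variance equals K(m-K)/m = m s (1 - s) with s = K/m.
   Hence pcc(u, v) = 1 - ham(u, v) / (2 m s (1 - s)) for every pair of voters,
   and averaging this identity over all pairs gives pair-agr = pcc-agr. *)

Section Votes.
Variables (R : rcfType) (m : nat).

Lemma bv_sqr (v : vote m) j : bv R v j ^+ 2 = bv R v j.
Proof. by rewrite /bv; case: (v j); rewrite ?expr1n ?expr0n. Qed.

Lemma sum_bv (v : vote m) : \sum_j bv R v j = (napp v)%:R.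
Proof.
rewrite /napp -sum1_card natr_sum [RHS]big_mkcond /=.
by apply: eq_bigr => j _; rewrite inE /bv; case: (v j).
Qed.

Lemma ham_dot (u v : vote m) :
  ham R u v = (napp u)%:R + (napp v)%:R - 2 * \sum_j bv R u j * bv R v j.
Proof.
rewrite -!sum_bv mulr_sumr -big_split -sumrB; apply: eq_bigr => j _.
by rewrite /bv; case: (u j); case: (v j);
  rewrite /= ?subrr ?subr0 ?sub0r ?normrN ?normr0 ?normr1; ring.
Qed.

Lemma sum_mul_centered (x y : 'I_m -> R) :
  \sum_j (x j - mean x) * (y j - mean y) =
  \sum_j x j * y j - (\sum_j x j) * (\sum_j y j) / m%:R.
Proof.
case: (posnP m) => [m0 | m_gt0].
  by move: x y; rewrite m0 => x y; rewrite !big_ord0 !mul0r subrr.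
have m_neq0 : m%:R != 0 :> R by rewrite pnatr_eq0 -lt0n.
rewrite (eq_bigr (fun j => x j * y j - mean y * x j - mean x * y j + mean x * mean y));
  last by move=> j _; ring.
rewrite !big_split /= !sumrN -!mulr_sumr sumr_const card_ord /mean.
by rewrite -[_ *+ m]mulr_natr; field.
Qed.

Lemma is_const_bvF (v : vote m) :
  (0 < napp v)%N -> (napp v < m)%N -> is_const (bv R v) = false.
Proof.
move=> /card_gt0P [j]; rewrite inE => vj napp_ltm; apply/negP => /forallP bv_const.
suff : napp v = m by move: napp_ltm => /[swap] ->; rewrite ltnn.
rewrite /napp -[RHS]card_ord -cardsT; apply: eq_card => k; rewrite !inE.
move: (bv_const j) => /forallP /(_ k) /eqP; rewrite /bv vj.
by case: (v k) => // /eqP; rewrite pnatr_eq0.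
Qed.

Section EqualSize.
Variable K : nat.
Hypotheses (K_gt0 : (0 < K)%N) (K_ltm : (K < m)%N).

Let m_neq0 : m%:R != 0 :> R.
Proof. by rewrite pnatr_eq0 -lt0n (leq_trans K_gt0 (ltnW K_ltm)). Qed.

Lemma sum_sqr_centered_bv (w : vote m) : napp w = K ->
  \sum_j (bv R w j - mean (bv R w)) ^+ 2 = K%:R * (m%:R - K%:R) / m%:R.
Proof.
move=> nw; under eq_bigr do rewrite expr2.
rewrite sum_mul_centered; under eq_bigr do rewrite -expr2 bv_sqr.
by rewrite sum_bv nw; field.
Qed.

Lemma pcc_bv_ham (u v : vote m) : napp u = K -> napp v = K ->
  pcc (bv R u) (bv R v) =
  1 - ham R u v / (2 * m%:R * (K%:R / m%:R) * (1 - K%:R / m%:R)).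
Proof.
move=> nu nv; have var_ge0 : 0 <= K%:R * (m%:R - K%:R) / m%:R :> R.
  by rewrite divr_ge0 ?mulr_ge0 ?subr_ge0 ?ler_nat // ltnW.
have K_neq0 : K%:R != 0 :> R by rewrite pnatr_eq0 -lt0n.
have mK_neq0 : m%:R - K%:R != 0 :> R by rewrite subr_eq0 eqr_nat gtn_eqF.
rewrite /pcc !is_const_bvF ?nu ?nv //= !sum_sqr_centered_bv // -expr2.
by rewrite sqr_sqrtr // sum_mul_centered ham_dot !sum_bv nu nv; field; apply/and3P.
Qed.

End EqualSize.
End Votes.

Lemma satr_uniform (R : rcfType) (m n K : nat) (V : 'I_n -> vote m) :
  (0 < n)%N -> (forall i, napp (V i) = K) -> satr R V = K%:R / m%:R.
Proof.
move=> n_gt0 nV; have n_neq0 : n%:R != 0 :> R by rewrite pnatr_eq0 -lt0n.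
rewrite /satr; under eq_bigr do rewrite nV.
by rewrite sumr_const card_ord -[_ *+ n]mulr_natl -mulf_div divff ?mul1r.
Qed.

Lemma sum_pairs_1B (R : numFieldType) (n : nat) (f : 'I_n -> 'I_n -> R) (D : R) :
  (0 < n)%N ->
  (\sum_i \sum_k (1 - f i k / D)) / n%:R ^+ 2 = 1 - (\sum_i \sum_k f i k) / (n%:R ^+ 2 * D).
Proof.
move=> n_gt0; have n_neq0 : n%:R != 0 :> R by rewrite pnatr_eq0 -lt0n.
under eq_bigr do rewrite sumrB sumr_const card_ord -mulr_suml.
rewrite sumrB sumr_const card_ord -mulr_suml -[n%:R *+ n]mulr_natr -expr2.
by rewrite mulrBl divff ?expf_neq0 // [in RHS]invfM mulrA mulrAC.
Qed.

Theorem proposition6 (R : rcfType) (m n : nat) (V : 'I_n -> vote m) :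
  (0 < n)%N ->
  (forall u v : 'I_n, (0 < napp (V u))%N /\ napp (V u) = napp (V v) /\ (napp (V v) < m)%N) ->
  pair_agr R V = pcc_agr R V.
Proof.
move=> n_gt0 hV; set K := napp (V (Ordinal n_gt0)).
have nV i : napp (V i) = K by case: (hV i (Ordinal n_gt0)) => _ [].
have [K_gt0 [_ K_ltm]] := hV (Ordinal n_gt0) (Ordinal n_gt0).
rewrite /pcc_agr; under eq_bigr do under eq_bigr do rewrite (pcc_bv_ham R K_gt0 K_ltm) ?nV //.
rewrite sum_pairs_1B // /pair_agr (satr_uniform R n_gt0 nV).
by congr (1 - _ / _); ring.
Qed.
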